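(* For any $1\leq i<j\leq n$ and any subspace $L$ of $\bigwedge^{k}V$, we have $N_{j\to i}N_{j\to i}N_{j\to i}L=N_{j\to i}N_{j\to i}L$. Moreover, if $L$ is monomial with respect to $e_j$, i.e. $L=\big(L\cap\bigwedge^{k}V^{(j)}\big)\oplus\big(L\cap(e_{j}\wedge\bigwedge^{k-1}V^{(j)})\big)$, then $N_{j\to i}N_{j\to i}L=N_{j\to i}L$.
   Context: $\mathbb{F}$ is a field (assumed throughout the paper, for expository purposes, to have characteristic not $2$), $V$ is an $n$-dimensional $\mathbb{F}$-vector space with a fixed basis $e_1,\dots,e_n$, and $\bigwedge V$ its exterior algebra. For $j\in[n]$, $V^{(j)}$ is the span of $\{e_h:h\neq j\}$, and $\bigwedge V^{(j)}$ is viewed as a subalgebra of $\bigwedge V$. Slow shift: for distinct $i,j\in[n]$ and nonzero $m\in\bigwedge^kV$, write uniquely $m=x+e_j\wedge y$ with $x\in\bigwedge^kV^{(j)}$, $y\in\bigwedge^{k-1}V^{(j)}$, and set $N_{j\to i}m=x+e_i\wedge y$ if this is nonzero, and $N_{j\to i}m=e_j\wedge y$ otherwise (the limit as $t\to0$ of the projective action of the linear map $e_j\mapsto e_i+te_j$ fixing the other $e_h$). For a subspace $L$ of $\bigwedge^kV$, $N_{j\to i}L$ is the span of $\{N_{j\to i}m:m\in L\setminus\{0\}\}$; it has the same dimension as $L$. *)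

From HB Require Import structures.
From mathcomp Require Import all_boot all_order all_algebra.
Set Implicit Arguments. Unset Strict Implicit. Unset Printing Implicit Defensive.
Import GRing.Theory.
Local Open Scope ring_scope.

(* The exterior algebra /\V of V = F^n, with basis e_S (S a subset of [n],
   e_S = e_{s_1} /\ ... /\ e_{s_k} for s_1 < ... < s_k), is represented by the
   coefficient functions {set 'I_n} -> F.  /\^k V = those supported on #|S| = k. *)
Definition ext (F : fieldType) (n : nat) := {ffun {set 'I_n} -> F^o}.

Section Ext.
Variables (F : fieldType) (n : nat).
Local Notation W := (ext F n).

(* sign of e_j /\ e_S for j notin S : (-1)^#{s in S | s < j} *)
Definition wsign (j : 'I_n) (S : {set 'I_n}) : F :=
  (-1) ^+ #|[set s in S | (s < j)%N]|.

Definition wedge_e (j : 'I_n) (y : W) : W :=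
  [ffun T : {set 'I_n} => if j \in T then wsign j T * y (T :\ j) else 0].

(* m = x + e_j /\ y with x, y in /\V^(j) *)
Definition xpart (j : 'I_n) (m : W) : W :=
  [ffun S : {set 'I_n} => if j \in S then 0 else m S].
Definition ypart (j : 'I_n) (m : W) : W :=
  [ffun S : {set 'I_n} => if j \in S then 0 else wsign j S * m (S :|: [set j])].

Definition slow_shift (j i : 'I_n) (m : W) : W :=
  let v := xpart j m + wedge_e i (ypart j m) in
  if v != 0 then v else wedge_e j (ypart j m).

Definition avoids (j : 'I_n) (w : W) : Prop := forall S : {set 'I_n}, j \in S -> w S = 0.
Definition through (j : 'I_n) (w : W) : Prop := forall S : {set 'I_n}, j \notin S -> w S = 0.

Definition homog (k : nat) (w : W) : Prop := forall S : {set 'I_n}, w S != 0 -> #|S| = k.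

(* N_{j->i} of a set P of vectors (given as a predicate): the span of
   { N_{j->i} m : m in P, m <> 0 }, i.e. the intersection of all subspaces
   containing these vectors (membership predicate). *)
Definition shiftSpan (j i : 'I_n) (P : W -> Prop) : W -> Prop :=
  fun w => forall U : {vspace W},
      (forall m, P m -> m != 0 -> slow_shift j i m \in U) -> w \in U.

Definition inL (L : {vspace W}) : W -> Prop := fun w => w \in L.

Definition monomial_wrt (j : 'I_n) (L : {vspace W}) : Prop :=
  forall m, m \in L -> exists x y : W,
      [/\ x \in L, y \in L, avoids j x, through j y & m = x + y].
End Ext.

From HB Require Import structures.
From mathcomp Require Import all_boot all_order all_algebra.
Set Implicit Arguments. Unset Strict Implicit. Unset Printing Implicit Defensive.
Import GRing.Theory.
Local Open Scope ring_scope.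

(* Write m = x + e_j /\ y.  The slow shift of m is [subst_e m] = x + e_i /\ y,
   the image of m under the linear substitution e_j |-> e_i, unless that
   vanishes, in which case it is [through_part m] = e_j /\ y.  Hence
   N_{j->i} L = subst_e L + through_part (L cap ker subst_e).  Since i <> j,
   subst_e is the identity on the forms avoiding e_j, which contain its image
   and are killed by through_part, and subst_e (through_part m) = subst_e m - x.
   These identities show that N_{j->i} L is always monomial with respect to e_j
   and that N_{j->i} is idempotent on such subspaces. *)

Section SlowShift.
Variables (F : fieldType) (n : nat) (i j : 'I_n).
Local Notation W := (ext F n).

Lemma xpart_is_linear : linear (xpart (F:=F) j).
Proof.
by move=> a u v; apply/ffunP=> S; rewrite !ffunE; case: ifP; rewrite ?scaler0 ?addr0.
Qed.

Lemma ypart_is_linear : linear (ypart (F:=F) j).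
Proof.
move=> a u v; apply/ffunP=> S; rewrite !ffunE; case: ifP => _.
  by rewrite scaler0 addr0.
by rewrite mulrDr [_ * (a * _)]mulrCA.
Qed.

Lemma wedge_e_is_linear (k : 'I_n) : linear (wedge_e (F:=F) k).
Proof.
move=> a u v; apply/ffunP=> S; rewrite !ffunE; case: ifP => _.
  by rewrite mulrDr [_ * (a * _)]mulrCA.
by rewrite scaler0 addr0.
Qed.

HB.instance Definition _ := GRing.isLinear.Build F W W *:%R (xpart j) xpart_is_linear.
HB.instance Definition _ := GRing.isLinear.Build F W W *:%R (ypart j) ypart_is_linear.
HB.instance Definition _ (k : 'I_n) :=
  GRing.isLinear.Build F W W *:%R (wedge_e k) (wedge_e_is_linear k).

Definition subst_e (m : W) : W := xpart j m + wedge_e i (ypart j m).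
Definition through_part (m : W) : W := wedge_e j (ypart j m).

Lemma subst_e_is_linear : linear subst_e.
Proof. by move=> a u v; rewrite /subst_e !linearP scalerDr addrACA. Qed.

Lemma through_part_is_linear : linear through_part.
Proof. by move=> a u v; rewrite /through_part !linearP. Qed.

HB.instance Definition _ := GRing.isLinear.Build F W W *:%R subst_e subst_e_is_linear.
HB.instance Definition _ :=
  GRing.isLinear.Build F W W *:%R through_part through_part_is_linear.

Lemma slow_shiftE (m : W) :
  slow_shift j i m = if subst_e m != 0 then subst_e m else through_part m.
Proof. by []. Qed.

Lemma avoids_xpart (m : W) : avoids j (xpart j m).
Proof. by move=> S jS; rewrite ffunE jS. Qed.

Lemma through_through_part (m : W) : through j (through_part m).
Proof. by move=> S jS; rewrite ffunE (negbTE jS). Qed.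

Lemma xpart_avoids (v : W) : avoids j v -> xpart j v = v.
Proof. by move=> vj; apply/ffunP=> S; rewrite ffunE; case: ifP => // /vj ->. Qed.

Lemma xpart_through (v : W) : through j v -> xpart j v = 0.
Proof. by move=> vj; apply/ffunP=> S; rewrite !ffunE; case: ifP => // /negbT /vj. Qed.

Lemma ypart_avoids (v : W) : avoids j v -> ypart j v = 0.
Proof.
move=> vj; apply/ffunP=> S; rewrite !ffunE; case: ifP => // _.
by rewrite vj ?mulr0 // !inE eqxx orbT.
Qed.

Lemma wsignD1 (S : {set 'I_n}) : wsign F j (S :\ j) = wsign F j S.
Proof.
rewrite /wsign; congr (_ ^+ _); apply: eq_card => s; rewrite !inE.
by case: eqVneq => [->|]; rewrite ?ltnn ?andbF.
Qed.

Lemma xpart_add_through_part (m : W) : xpart j m + through_part m = m.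
Proof.
apply/ffunP=> S; rewrite !ffunE; case: ifPn => jS; last by rewrite addr0.
rewrite add0r !inE eqxx /= setUC setD1K // wsignD1 mulrA.
by rewrite /wsign -expr2 sqrr_sign mul1r.
Qed.

Lemma through_part_avoids (v : W) : avoids j v -> through_part v = 0.
Proof. by move=> vj; rewrite /through_part ypart_avoids // linear0. Qed.

Lemma subst_e_avoids (v : W) : avoids j v -> subst_e v = v.
Proof. by move=> vj; rewrite /subst_e xpart_avoids // ypart_avoids // linear0 addr0. Qed.

Lemma subst_e_through_part (m : W) : subst_e (through_part m) = subst_e m - xpart j m.
Proof.
rewrite -{2}(xpart_add_through_part m) linearD /=.
by rewrite (subst_e_avoids (avoids_xpart m)) addrC addKr.
Qed.

Lemma through_part_idem (m : W) : through_part (through_part m) = through_part m.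
Proof.
rewrite -{2}(xpart_add_through_part m) linearD /=.
by rewrite (through_part_avoids (avoids_xpart m)) add0r.
Qed.

Lemma xpart_monomial (L : {vspace W}) (m : W) :
  monomial_wrt j L -> m \in L -> xpart j m \in L.
Proof.
move=> /[apply] -[x [y [xL _ xj yj ->]]].
by rewrite linearD /= xpart_avoids // xpart_through // addr0.
Qed.

Definition shift_space (L : {vspace W}) : {vspace W} :=
  (linfun subst_e @: L + linfun through_part @: (L :&: lker (linfun subst_e)))%VS.

Lemma mem_shift_space (L : {vspace W}) (w : W) :
  reflect (exists a b, [/\ a \in L, b \in L, subst_e b = 0 &
                          w = subst_e a + through_part b])
          (w \in shift_space L).
Proof.
apply: (iffP memv_addP) => [[u /memv_imgP [a aL ->]] [v /memv_imgP [b]]|].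
  rewrite memv_cap memv_ker lfunE => /andP[bL /eqP b0] -> ->.
  by exists a, b; rewrite !lfunE.
move=> [a [b [aL bL b0 ->]]].
exists (subst_e a); first by rewrite -[subst_e a](@lfunE _ _ _ subst_e) memv_img.
exists (through_part b) => //.
rewrite -[through_part b](@lfunE _ _ _ through_part) memv_img //.
by rewrite memv_cap bL memv_ker lfunE /= b0.
Qed.

Lemma subst_e_mem_shift_space (L : {vspace W}) (a : W) :
  a \in L -> subst_e a \in shift_space L.
Proof.
by move=> aL; apply/mem_shift_space; exists a, 0; rewrite mem0v !linear0 addr0.
Qed.

Lemma through_part_mem_shift_space (L : {vspace W}) (b : W) :
  b \in L -> subst_e b = 0 -> through_part b \in shift_space L.
Proof.
by move=> bL b0; apply/mem_shift_space; exists 0, b; rewrite mem0v linear0 add0r.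
Qed.

Lemma shiftSpan_vspace (P : W -> Prop) (L : {vspace W}) :
  (forall m, P m <-> m \in L) ->
  forall w, shiftSpan j i P w <-> w \in shift_space L.
Proof.
move=> PL w; split=> [|/mem_shift_space [a [b [aL bL b0 ->]]] U sPU].
  apply=> m /PL mL _; rewrite slow_shiftE.
  case: ifPn => [_|/negPn/eqP m0]; first exact: subst_e_mem_shift_space.
  exact: through_part_mem_shift_space.
have {}sPU m : m \in L -> m != 0 -> slow_shift j i m \in U by move/PL; apply: sPU.
apply: memvD.
  have [->|a0] := eqVneq (subst_e a) 0; first exact: mem0v.
  have nz_a : a != 0 by apply: contra_neq a0 => ->; rewrite linear0.
  by have := sPU a aL nz_a; rewrite slow_shiftE a0.
have [->|nz_b] := eqVneq b 0; first by rewrite linear0 mem0v.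
by have := sPU b bL nz_b; rewrite slow_shiftE b0 eqxx.
Qed.

Hypothesis neq_ij : i != j.

Lemma avoids_subst_e (m : W) : avoids j (subst_e m).
Proof.
move=> S jS; rewrite ffunE avoids_xpart // add0r ffunE.
by case: ifP => // iS; rewrite ffunE !inE jS eq_sym neq_ij /= mulr0.
Qed.

Lemma subst_e_idem (m : W) : subst_e (subst_e m) = subst_e m.
Proof. exact/subst_e_avoids/avoids_subst_e. Qed.

Lemma through_part_subst_e (m : W) : through_part (subst_e m) = 0.
Proof. exact/through_part_avoids/avoids_subst_e. Qed.

Lemma shift_space_monomial (L : {vspace W}) : monomial_wrt j (shift_space L).
Proof.
move=> w /mem_shift_space [a [b [aL bL b0 ->]]].
exists (subst_e a), (through_part b); split.
- exact: subst_e_mem_shift_space.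
- exact: through_part_mem_shift_space.
- exact: avoids_subst_e.
- exact: through_through_part.
- by [].
Qed.

Lemma shift_space_idem (L : {vspace W}) :
  monomial_wrt j L -> shift_space (shift_space L) = shift_space L.
Proof.
move=> Lmono; apply/vspaceP=> w; apply/mem_shift_space/mem_shift_space.
  move=> [u [c [/mem_shift_space [a [b [aL bL b0 ->]]]
                /mem_shift_space [a' [b' [_ b'L b'0 ->]]] _ ->]]].
  exists (a - xpart j b), b'; split => //.
  - by rewrite memvB // xpart_monomial.
  - rewrite linearD /= subst_e_idem subst_e_through_part b0 sub0r.
    rewrite linearD /= through_part_subst_e through_part_idem add0r.
    by rewrite linearB /= (subst_e_avoids (avoids_xpart b)).
move=> [a [b [aL bL b0 ->]]].
exists (subst_e a), b; split=> //; last by rewrite subst_e_idem.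
  exact: subst_e_mem_shift_space.
rewrite -{1}(xpart_add_through_part b) -(subst_e_avoids (avoids_xpart b)).
by apply/mem_shift_space; exists (xpart j b), b; rewrite ?xpart_monomial.
Qed.

End SlowShift.

Theorem corollary3p7 (F : fieldType) (n k : nat) (i j : 'I_n)
    (L : {vspace ext F n}) :
  (2%:R : F) != 0 ->
  (i < j)%N ->
  (forall m, m \in L -> homog k m) ->
  (forall w, shiftSpan j i (shiftSpan j i (shiftSpan j i (inL L))) w
             <-> shiftSpan j i (shiftSpan j i (inL L)) w)
  /\
  (monomial_wrt j L ->
   forall w, shiftSpan j i (shiftSpan j i (inL L)) w
             <-> shiftSpan j i (inL L) w).
Proof.
move=> _ lt_ij _.
have neq_ij : i != j by rewrite neq_ltn lt_ij.
have N1 := shiftSpan_vspace i j (fun w => iff_refl (inL L w)).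
have N2 := shiftSpan_vspace i j N1.
have N3 := shiftSpan_vspace i j N2.
split=> [|Lmono] w.
  apply: iff_trans (N3 w) (iff_sym (iff_trans (N2 w) _)).
  by rewrite (shift_space_idem neq_ij (shift_space_monomial neq_ij (L:=L))).
apply: iff_trans (N2 w) (iff_sym (iff_trans (N1 w) _)).
by rewrite shift_space_idem.
Qed.
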